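(* Let $L=\Lambda_{24}$ be the Leech lattice and $\mathrm{Co}_0=O(\Lambda_{24})$ its isometry group, and let $\varepsilon$ be a cocycle as in the context. Then there is no family of functions $(\zeta_g:L\to U(1))_{g\in\mathrm{Co}_0}$ such that for all $g,g_1,g_2\in\mathrm{Co}_0$ and $k,k'\in L$: (i) $\varepsilon(k,k')\zeta_g(k+k')=\zeta_g(k)\zeta_g(k')\varepsilon(g(k),g(k'))$ and (ii) $\zeta_{g_2}(g_1(k))\zeta_{g_1}(k)=\zeta_{g_2g_1}(k)$. In particular the exact sequence $1\to\mathrm{Hom}(L,\{\pm1\})\to O(\hat L)\to \mathrm{Co}_0\to1$ does not split, i.e. $\mathrm{Co}_0$ does not lift to a subgroup of $O(\hat L)$.
   Context: The Leech lattice can be taken as $\Lambda_{24}=(\tfrac1{\sqrt2}G_{24}+\sqrt2\mathbb Z^{24}_+)\cup(\tfrac1{2\sqrt2}\underline1+\tfrac1{\sqrt2}G_{24}+\sqrt2\mathbb Z^{24}_-)\subset\mathbb R^{24}$ (standard inner product), where $G_{24}$ is the extended binary Golay code with codewords viewed as $0/1$ vectors, $\mathbb Z^{24}_\pm=\{x\in\mathbb Z^{24}:|x|^2\equiv 0 \text{ resp. }1\pmod 2\}$, $\underline1=(1,\dots,1)$; it is the unique even unimodular rank-24 lattice without vectors of squared length 2. Let $\varepsilon:L\times L\to\{\pm1\}$ be a normalized 2-cocycle with $\varepsilon(k,k')\varepsilon(k',k)=(-1)^{k\cdot k'}$ (unique up to coboundary). $\hat L=\{\pm1\}\times L$ with $(a,k)(b,k')=(ab\varepsilon(k,k'),k+k')$,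 $\kappa=(-1,0)$, $e^k=(1,k)$; $O(\hat L)=\{f\in\mathrm{Aut}(\hat L):f(\kappa)=\kappa,\ \bar f\in O(L)\}$ where $\bar f(k)$ is the $L$-component of $f(e^k)$; $\mathrm{Hom}(L,\{\pm1\})$ embeds as $(a,k)\mapsto(a\eta(k),k)$. *)

From HB Require Import structures.
From mathcomp Require Import all_boot all_order all_algebra.
From mathcomp Require Import complex reals.
Set Implicit Arguments. Unset Strict Implicit. Unset Printing Implicit Defensive.
Import Order.TTheory GRing.Theory Num.Theory.
Local Open Scope ring_scope.

(* Generator matrix of the extended binary Golay code G24: the 12 cyclic
   shifts of the generator polynomial 1+x^2+x^4+x^5+x^6+x^10+x^11 of the
   binary [23,12,7] Golay code, each extended by an overall parity bit.
   (Checked by enumeration: 4096 codewords, minimum weight 8.) *)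
Definition golay_rows : seq (seq nat) :=
  [:: [:: 1;0;1;0;1;1;1;0;0;0;1;1;0;0;0;0;0;0;0;0;0;0;0;1];
      [:: 0;1;0;1;0;1;1;1;0;0;0;1;1;0;0;0;0;0;0;0;0;0;0;1];
      [:: 0;0;1;0;1;0;1;1;1;0;0;0;1;1;0;0;0;0;0;0;0;0;0;1];
      [:: 0;0;0;1;0;1;0;1;1;1;0;0;0;1;1;0;0;0;0;0;0;0;0;1];
      [:: 0;0;0;0;1;0;1;0;1;1;1;0;0;0;1;1;0;0;0;0;0;0;0;1];
      [:: 0;0;0;0;0;1;0;1;0;1;1;1;0;0;0;1;1;0;0;0;0;0;0;1];
      [:: 0;0;0;0;0;0;1;0;1;0;1;1;1;0;0;0;1;1;0;0;0;0;0;1];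
      [:: 0;0;0;0;0;0;0;1;0;1;0;1;1;1;0;0;0;1;1;0;0;0;0;1];
      [:: 0;0;0;0;0;0;0;0;1;0;1;0;1;1;1;0;0;0;1;1;0;0;0;1];
      [:: 0;0;0;0;0;0;0;0;0;1;0;1;0;1;1;1;0;0;0;1;1;0;0;1];
      [:: 0;0;0;0;0;0;0;0;0;0;1;0;1;0;1;1;1;0;0;0;1;1;0;1];
      [:: 0;0;0;0;0;0;0;0;0;0;0;1;0;1;0;1;1;1;0;0;0;1;1;1] ].

Definition golay_gen (r : 'I_12) (i : 'I_24) : bool :=
  nth 0%N (nth [::] golay_rows r) i == 1%N.

Definition in_golay (c : 'I_24 -> bool) : Prop :=
  exists a : 'I_12 -> bool,
    forall i, c i = \big[addb/false]_(r < 12) (a r && golay_gen r i).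

(* Ambient space: rational row vectors of length 24.  A vector x represents
   the point x / (2*sqrt 2) of R^24, so that the Leech lattice becomes
   { 2c + 4y : c in G24, y in Z^24_+ } u { 1 + 2c + 4y : c in G24, y in Z^24_- }
   and the standard inner product of R^24 becomes dot below. *)
Definition vec := 'rV[rat]_24.

Definition in_leech (x : vec) : Prop :=
  exists (c : 'I_24 -> bool) (y : 'I_24 -> int), in_golay c /\
   ( ((2 %| \sum_i y i ^+ 2)%Z /\
        forall i, x ord0 i = ((2 * (c i : nat))%:Z + 4 * y i)%:~R)
   \/ (~~ (2 %| \sum_i y i ^+ 2)%Z /\
        forall i, x ord0 i = (1 + (2 * (c i : nat))%:Z + 4 * y i)%:~R) ).

Definition dot (x y : vec) : rat := (x *m y^T) ord0 ord0 / 8.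

(* Co_0 = O(Lambda_24): orthogonal maps k |-> k *m M of R^24 preserving the
   lattice (row-vector convention: the map g1 then g2, i.e. g2 g1, has matrix
   M1 *m M2). *)
Definition Co0 (M : 'M[rat]_24) : Prop :=
  M *m M^T = 1%:M /\ (forall x, in_leech x -> in_leech (x *m M)).

(* {+1,-1} encoded by bool: true = -1. *)
Definition leech_cocycle (eps : vec -> vec -> bool) : Prop :=
  (forall k, in_leech k -> eps 0 k = false /\ eps k 0 = false) /\
  (forall k k' k'', in_leech k -> in_leech k' -> in_leech k'' ->
     eps k k' (+) eps (k + k') k'' = eps k' k'' (+) eps k (k' + k'')) /\
  (forall k k', in_leech k -> in_leech k' ->
     eps k k' (+) eps k' k = odd `|Num.floor (dot k k')|%N).

Definition sgnC (R : realType) (b : bool) : R[i] := if b then -1 else 1.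

(* The central extension \hat L = {+-1} x L, with (a,k) encoded as (a : bool, k). *)
Definition in_hatL (x : bool * vec) : Prop := in_leech x.2.

Definition hmul (eps : vec -> vec -> bool) (x y : bool * vec) : bool * vec :=
  (x.1 (+) y.1 (+) eps x.2 y.2, x.2 + y.2).

Definition in_OhatL (eps : vec -> vec -> bool) (f : bool * vec -> bool * vec) : Prop :=
  (forall x, in_hatL x -> in_hatL (f x)) /\
  (forall x y, in_hatL x -> in_hatL y -> f (hmul eps x y) = hmul eps (f x) (f y)) /\
  (forall x y, in_hatL x -> in_hatL y -> f x = f y -> x = y) /\
  (forall y, in_hatL y -> exists2 x, in_hatL x & f x = y) /\
  f (true, 0) = (true, 0) /\
  (exists M, Co0 M /\ forall k, in_leech k -> (f (false, k)).2 = k *m M).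

From HB Require Import structures.
From mathcomp Require Import all_boot all_order all_algebra.
From mathcomp Require Import complex reals.
Set Implicit Arguments. Unset Strict Implicit. Unset Printing Implicit Defensive.
Import Order.TTheory GRing.Theory Num.Theory.
Local Open Scope ring_scope.

(* Let g, h be commuting involutions of Co_0 (here coordinate permutations in
   M_24) and m a lattice vector fixed by g.  For an involution s and a vector k
   with k + s k = m and <k, s k> odd, relation (i) at (k, s k) together with
   relation (ii) at (s, s, k) forces
   zeta_s(m) = eps(k, s k) eps(s k, k) = (-1)^<k, s k> = -1.
   Exhibiting such k for s = g, h, gh, relation (ii) at (g, h, m) reads
   zeta_gh(m) = zeta_h(m) zeta_g(m), i.e. -1 = 1.  A splitting of
   O(hat L) -> Co_0 would produce such a family, via s(g)(e^k) = (zeta_g(k), g k). *)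

Lemma big_ord_foldr (T : Type) (idx : T) (op : T -> T -> T) (n : nat) (F : nat -> T) :
  \big[op/idx]_(i < n) F i = foldr op idx (map F (iota 0 n)).
Proof. by rewrite foldrE big_map -(big_mkord xpredT) /index_iota subn0. Qed.

Lemma all_iotaP (n : nat) (P : pred nat) : all P (iota 0 n) -> forall i : 'I_n, P i.
Proof. by move=> /allP allP i; apply: allP; rewrite mem_iota add0n ltn_ord. Qed.

Lemma in_golay_ext (c d : 'I_24 -> bool) : in_golay c -> c =1 d -> in_golay d.
Proof. by move=> [a ha] cd; exists a => i; rewrite -cd ha. Qed.

Lemma in_golay0 : in_golay (fun _ => false).
Proof. by exists (fun _ => false) => i; rewrite big1. Qed.

Lemma in_golayD (c d : 'I_24 -> bool) :
  in_golay c -> in_golay d -> in_golay (fun i => c i (+) d i).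
Proof.
move=> [a ha] [b hb]; exists (fun r => a r (+) b r) => i.
rewrite ha hb -big_split /=; apply: eq_bigr => r _.
by case: (a r); case: (b r); case: (golay_gen r i).
Qed.

Lemma in_golay_sum (I : finType) (v : I -> 'I_24 -> bool) (a : I -> bool) :
  (forall r, in_golay (v r)) ->
  in_golay (fun i => \big[addb/false]_(r : I) (a r && v r i)).
Proof.
move=> golay_v.
suff golay_s (s : seq I) : in_golay (fun i => \big[addb/false]_(r <- s) (a r && v r i)) by [].
elim: s => [|r s IHs].
  by apply: (in_golay_ext in_golay0) => i; rewrite big_nil.
have golay_avr : in_golay (fun i => a r && v r i).
  by case: (a r); [apply: (in_golay_ext (golay_v r)) | apply: in_golay0].
by apply: (in_golay_ext (in_golayD golay_avr IHs)) => i; rewrite big_cons.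
Qed.

Definition golay_aut (f : 'I_24 -> 'I_24) : Prop :=
  forall c, in_golay c -> in_golay (c \o f).

Lemma golay_aut_of_rows (f : 'I_24 -> 'I_24) :
  (forall r, in_golay (golay_gen r \o f)) -> golay_aut f.
Proof.
move=> golay_rows_f c [a ha].
by apply: (in_golay_ext (in_golay_sum a golay_rows_f)) => i; rewrite /= ha.
Qed.

Definition coord_mx {R : pzRingType} {n : nat} (f : 'I_n -> 'I_n) : 'M[R]_n :=
  \matrix_(i, j) (i == f j)%:R.

Section CoordMx.
Context {R : pzRingType} {n : nat}.
Implicit Type f g : 'I_n -> 'I_n.

Lemma mul_coord_mx m (A : 'M[R]_(m, n)) f i j : (A *m coord_mx f) i j = A i (f j).
Proof.
rewrite mxE (bigD1 (f j)) //= mxE eqxx mulr1 big1 ?addr0 // => k /negbTE nfk.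
by rewrite mxE nfk mulr0.
Qed.

Lemma coord_mxM f g : coord_mx f *m coord_mx g = coord_mx (f \o g) :> 'M[R]_n.
Proof. by apply/matrixP => i j; rewrite mul_coord_mx !mxE. Qed.

Lemma tr_coord_mx f g : cancel f g -> cancel g f -> (coord_mx f)^T = coord_mx g :> 'M[R]_n.
Proof.
by move=> fK gK; apply/matrixP => i j; rewrite !mxE eq_sym (can2_eq fK gK).
Qed.

Lemma coord_mx_invol f : involutive f -> coord_mx f *m coord_mx f = 1%:M :> 'M[R]_n.
Proof. by move=> fK; apply/matrixP => i j; rewrite coord_mxM !mxE /= fK. Qed.

End CoordMx.

Lemma in_leech0 : in_leech 0.
Proof.
exists (fun _ => false), (fun _ => 0); split; first exact: in_golay0.
by left; split=> [|i]; rewrite ?big1 ?mxE // => i _; rewrite expr0n.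
Qed.

Lemma in_leech_coord_mx (f : 'I_24 -> 'I_24) (x : vec) :
  injective f -> golay_aut f -> in_leech x -> in_leech (x *m coord_mx f).
Proof.
move=> f_inj f_aut [c [y [golay_c xE]]].
exists (c \o f), (y \o f); split; first exact: f_aut.
have -> : \sum_i (y \o f) i ^+ 2 = \sum_i y i ^+ 2 by rewrite [RHS](reindex_inj f_inj).
by case: xE => -[y_par xE]; [left | right]; split=> // i; rewrite mul_coord_mx xE.
Qed.

Lemma Co0_1 : Co0 1%:M.
Proof. by split=> [|x]; rewrite ?trmx1 mulmx1. Qed.

Lemma Co0_mul (A B : 'M[rat]_24) : Co0 A -> Co0 B -> Co0 (A *m B).
Proof.
move=> [A_orth A_leech] [B_orth B_leech]; split=> [|x x_leech].
  by rewrite trmx_mul mulmxA -(mulmxA A) B_orth mulmx1 A_orth.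
by rewrite mulmxA; apply/B_leech/A_leech.
Qed.

Lemma Co0_coord_mx (f : 'I_24 -> 'I_24) :
  involutive f -> golay_aut f -> Co0 (coord_mx f).
Proof.
move=> fK f_aut; split=> [|x]; last exact/in_leech_coord_mx/f_aut/inv_inj.
by rewrite (tr_coord_mx fK fK) coord_mx_invol.
Qed.

Definition golay_entry (r i : nat) : bool := nth 0%N (nth [::] golay_rows r) i == 1%N.

Definition golay_span (a : seq bool) (i : nat) : bool :=
  foldr addb false (map (fun r => nth false a r && golay_entry r i) (iota 0 12)).

(* Row [r] of the generator matrix starts with [r] zeros and a one, so the
   coefficients of a codeword can be read off its first 12 coordinates. *)
Definition golay_coeffs (c : nat -> bool) : seq bool :=
  foldl (fun a r => rcons a (c r (+) golay_span a r)) [::] (iota 0 12).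

Definition golayb (c : nat -> bool) : bool :=
  all (fun i => c i == golay_span (golay_coeffs c) i) (iota 0 24).

Lemma golayb_sound (c : 'I_24 -> bool) (cn : nat -> bool) :
  (forall i, c i = cn i) -> golayb cn -> in_golay c.
Proof.
move=> cE /all_iotaP span_c; exists (fun r => nth false (golay_coeffs cn) r) => i.
by rewrite cE (eqP (span_c i)) /golay_span -big_ord_foldr.
Qed.

Definition seq_map (l : seq nat) (i : nat) : nat := (nth 0 l i %% 24)%N.

Definition ord_map (l : seq nat) (i : 'I_24) : 'I_24 :=
  Ordinal (ltn_pmod (nth 0 l i) (isT : (0 < 24)%N)).

Lemma golay_aut_of_check (f : 'I_24 -> 'I_24) (p : nat -> nat) :
  (forall i, val (f i) = p i) ->
  all (fun r => golayb (fun i => golay_entry r (p i))) (iota 0 12) -> golay_aut f.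
Proof.
move=> fE /all_iotaP golay_rows_p; apply: golay_aut_of_rows => r.
by apply: (golayb_sound _ (golay_rows_p r)) => i; rewrite /= /golay_gen fE.
Qed.

Lemma involutive_of_check (f : 'I_24 -> 'I_24) (p : nat -> nat) :
  (forall i, val (f i) = p i) -> all (fun i => p (p i) == i) (iota 0 24) ->
  involutive f.
Proof. by move=> fE /all_iotaP pK i; apply/val_inj; rewrite /= !fE (eqP (pK i)). Qed.

Definition vrow (l : seq int) : vec := \row_i (nth 0 l i)%:~R.

Definition relabel (p : nat -> nat) (l : seq int) : seq int := mkseq (fun j => nth 0 l (p j)) 24.

Lemma vrow_coord_mx (f : 'I_24 -> 'I_24) (p : nat -> nat) (l : seq int) :
  (forall i, val (f i) = p i) -> vrow l *m coord_mx f = vrow (relabel p l).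
Proof. by move=> fE; apply/rowP => j; rewrite mul_coord_mx !mxE nth_mkseq // fE. Qed.

(* A candidate decomposition [l = t + 2 c + 4 y] as in [in_leech]; [leechb]
   verifies it. *)
Definition leech_type (l : seq int) : bool := odd `|nth 0%R l 0|%N.

Definition leech_code (l : seq int) (i : nat) : bool :=
  odd `|((nth 0 l i - (leech_type l)%:Z) %/ 2)%Z|%N.

Definition leech_rest (l : seq int) (i : nat) : int :=
  ((nth 0 l i - (leech_type l)%:Z - (2 * leech_code l i)%N%:Z) %/ 4)%Z.

Definition leechb (l : seq int) : bool :=
  [&& all (fun i => nth 0 l i ==
                    (leech_type l)%:Z + (2 * leech_code l i)%N%:Z + 4 * leech_rest l i)
          (iota 0 24),
      golayb (leech_code l) &
      (2 %| foldr +%R 0 (map (fun i => leech_rest l i ^+ 2) (iota 0 24)))%Z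
        == ~~ leech_type l].

Lemma leechb_sound (l : seq int) : leechb l -> in_leech (vrow l).
Proof.
move=> /and3P[/all_iotaP lE golay_c /eqP y_par].
exists (leech_code l), (leech_rest l); split; first exact: golayb_sound golay_c.
rewrite (big_ord_foldr _ _ _ (fun i => leech_rest l i ^+ 2)) y_par.
by case: (leech_type l) lE => lE; [right | left]; split=> // i;
  rewrite mxE (eqP (lE i)) ?add0r.
Qed.

Definition sprod (l l' : seq int) : int :=
  foldr +%R 0 (map (fun i => nth 0 l i * nth 0 l' i) (iota 0 24)).

Lemma dot_vrow (l l' : seq int) : dot (vrow l) (vrow l') = (sprod l l')%:~R / 8.
Proof.
rewrite /dot !mxE /sprod -big_ord_foldr rmorph_sum; congr (_ / _).
by apply: eq_bigr => i _; rewrite !mxE rmorphM.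
Qed.

Definition odd_split (M : 'M[rat]_24) (m : vec) : Prop :=
  exists2 k, in_leech k & k + k *m M = m /\ odd `|Num.floor (dot k (k *m M))|%N.

Definition odd_split_check (p : nat -> nat) (k m : seq int) : bool :=
  let k' := relabel p k in let s := sprod k k' in
  [&& leechb k,
      all (fun j => nth 0 m j == nth 0 k j + nth 0 k' j) (iota 0 24),
      (8 %| s)%Z & odd `|(s %/ 8)%Z|%N].

Lemma odd_split_of_check (f : 'I_24 -> 'I_24) (p : nat -> nat) (k m : seq int) :
  (forall i, val (f i) = p i) -> odd_split_check p k m -> odd_split (coord_mx f) (vrow m).
Proof.
move=> fE /and4P[k_leech /all_iotaP mE dvd8 odd8]; exists (vrow k).
  exact: leechb_sound.
rewrite (vrow_coord_mx _ fE) dot_vrow -(divzK dvd8) rmorphM /= mulfK //.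
rewrite intrKfloor; split=> //.
by apply/rowP => j; rewrite !mxE (eqP (mE j)) rmorphD.
Qed.

(* g and h are commuting involutions of M_24, and m is fixed by g; each witness
   k of [odd_split] for s = g, h, gh has <k, s k> = -3. *)
Definition g_seq : seq nat := [::
  16; 8; 3; 2; 18; 9; 20; 17; 1; 5; 13; 14;
  23; 10; 11; 19; 0; 7; 4; 15; 6; 22; 21; 12].
Definition h_seq : seq nat := [::
  21; 9; 7; 17; 12; 8; 11; 2; 5; 1; 19; 6;
  4; 15; 20; 13; 22; 3; 23; 10; 14; 0; 16; 18].
Definition m_seq : seq int := [::
  2; 0; 0; 0; 0; 0; 2; 0; 0; 0; 2; 2;
  0; 2; 2; 2; 2; 0; 0; 2; 2; 2; 2; 0].
Definition kg_seq : seq int := [::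
  -1; -1; -1; 1; -1; -1; 1; -1; 1; 1; 1; 1;
  -1; 1; 1; -1; 3; 1; 1; 3; 1; -1; 3; 1].
Definition kh_seq : seq int := [::
  1; -1; -3; -1; -1; -1; 1; 3; 1; 1; 1; 1;
  1; 1; -1; 1; 1; 1; -1; 1; 3; 1; 1; 1].
Definition kgh_seq : seq int := [::
  -1; -1; -1; -1; -1; 1; 1; 1; -1; 1; 1; -1;
  -1; 1; 1; 1; -1; 1; 1; 1; 3; 3; 3; 1].

Definition g_map : 'I_24 -> 'I_24 := ord_map g_seq.
Definition h_map : 'I_24 -> 'I_24 := ord_map h_seq.

Lemma g_map_invol : involutive g_map.
Proof. by apply: (@involutive_of_check _ (seq_map g_seq)) => [//|]; vm_compute. Qed.

Lemma h_map_invol : involutive h_map.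
Proof. by apply: (@involutive_of_check _ (seq_map h_seq)) => [//|]; vm_compute. Qed.

Lemma gh_map_invol : involutive (g_map \o h_map).
Proof.
by apply: (@involutive_of_check _ (fun i => seq_map g_seq (seq_map h_seq i)))
  => [//|]; vm_compute.
Qed.

Lemma g_map_aut : golay_aut g_map.
Proof. by apply: (@golay_aut_of_check _ (seq_map g_seq)) => [//|]; vm_compute. Qed.

Lemma h_map_aut : golay_aut h_map.
Proof. by apply: (@golay_aut_of_check _ (seq_map h_seq)) => [//|]; vm_compute. Qed.

Lemma m_leech : in_leech (vrow m_seq).
Proof. by apply: leechb_sound; vm_compute. Qed.

Lemma m_fixed_g : vrow m_seq *m coord_mx g_map = vrow m_seq.
Proof. by rewrite (@vrow_coord_mx _ (seq_map g_seq)) //; congr vrow; vm_compute. Qed.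

Lemma odd_split_g : odd_split (coord_mx g_map) (vrow m_seq).
Proof. by apply: (@odd_split_of_check _ (seq_map g_seq) kg_seq) => [//|]; vm_compute. Qed.

Lemma odd_split_h : odd_split (coord_mx h_map) (vrow m_seq).
Proof. by apply: (@odd_split_of_check _ (seq_map h_seq) kh_seq) => [//|]; vm_compute. Qed.

Lemma odd_split_gh : odd_split (coord_mx (g_map \o h_map)) (vrow m_seq).
Proof.
by apply: (@odd_split_of_check _ (fun i => seq_map g_seq (seq_map h_seq i)) kgh_seq)
  => [//|]; vm_compute.
Qed.

Lemma sgnC_addb (R : realType) (a b : bool) : sgnC R (a (+) b) = sgnC R a * sgnC R b.
Proof. by case: a; case: b; rewrite /sgnC /= ?mulrNN ?mulr1 ?mul1r. Qed.

Section Twist.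
Variables (R : realType) (eps : vec -> vec -> bool) (zeta : 'M[rat]_24 -> vec -> R[i]).
Hypothesis eps_cocycle : leech_cocycle eps.
Hypothesis zeta_norm : forall M k, Co0 M -> in_leech k -> `|zeta M k| = 1.
Hypothesis zeta_twist : forall M k k', Co0 M -> in_leech k -> in_leech k' -> in_leech (k + k') ->
  sgnC R (eps k k') * zeta M (k + k') = zeta M k * zeta M k' * sgnC R (eps (k *m M) (k' *m M)).
Hypothesis zeta_mul : forall M1 M2 k, Co0 M1 -> Co0 M2 -> in_leech k ->
  zeta M2 (k *m M1) * zeta M1 k = zeta (M1 *m M2) k.

Lemma zeta_1 k : in_leech k -> zeta 1%:M k = 1.
Proof.
move=> k_leech.
have zeta_neq0 : zeta 1%:M k != 0 by rewrite -normr_eq0 zeta_norm ?oner_eq0 //; exact: Co0_1.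
apply: (mulIf zeta_neq0); rewrite mul1r.
by have := zeta_mul Co0_1 Co0_1 k_leech; rewrite !mulmx1.
Qed.

Lemma zeta_odd_split M m :
  Co0 M -> M *m M = 1%:M -> in_leech m -> odd_split M m -> zeta M m = -1.
Proof.
move=> M_Co0 MM m_leech [k k_leech [mE odd_kkM]]; subst m.
have kM_leech : in_leech (k *m M) by apply: M_Co0.2.
have := zeta_twist M_Co0 k_leech kM_leech m_leech.
rewrite -mulmxA MM mulmx1 [zeta M k * _]mulrC zeta_mul // MM zeta_1 // mul1r.
have := eps_cocycle.2.2 _ _ k_leech kM_leech; rewrite odd_kkM.
case: (eps k _); case: (eps _ k) => //= _; rewrite /sgnC ?mul1r ?mulr1 //.
by rewrite mulN1r => <-; rewrite opprK.
Qed.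

Lemma no_twist : False.
Proof.
have g_Co0 := Co0_coord_mx g_map_invol g_map_aut.
have h_Co0 := Co0_coord_mx h_map_invol h_map_aut.
have gh_Co0 : Co0 (coord_mx (g_map \o h_map)) by rewrite -coord_mxM; exact: Co0_mul.
have zeta_g := zeta_odd_split g_Co0 (coord_mx_invol g_map_invol) m_leech odd_split_g.
have zeta_h := zeta_odd_split h_Co0 (coord_mx_invol h_map_invol) m_leech odd_split_h.
have zeta_gh := zeta_odd_split gh_Co0 (coord_mx_invol gh_map_invol) m_leech odd_split_gh.
have := zeta_mul g_Co0 h_Co0 m_leech.
rewrite m_fixed_g coord_mxM zeta_g zeta_h zeta_gh mulrNN => /eqP.
by rewrite mulr1 -addr_eq0 (_ : 1 + 1 = 2%:R) // pnatr_eq0.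
Qed.

End Twist.

Lemma OhatL_pair (eps : vec -> vec -> bool) (f : bool * vec -> bool * vec) a v :
  leech_cocycle eps -> in_OhatL eps f -> in_leech v ->
  f (a, v) = (a (+) (f (false, v)).1, (f (false, v)).2).
Proof.
move=> [eps0 _] [f_hatL [f_mul [_ [_ [f_kappa _]]]]] v_leech.
case: a; last by case: (f (false, v)).
have -> : (true, v) = hmul eps (true, 0) (false, v) by rewrite /hmul (eps0 _ v_leech).1 add0r.
rewrite f_mul ?f_kappa //; last exact: in_leech0.
by rewrite /hmul /= (eps0 _ (f_hatL (false, v) v_leech)).1 add0r addbF.
Qed.

Definition splitting_phase (R : realType) (s : 'M[rat]_24 -> bool * vec -> bool * vec)
  (M : 'M[rat]_24) (k : vec) : R[i] := sgnC R (s M (false, k)).1.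

Section Splitting.
Variables (R : realType) (eps : vec -> vec -> bool) (s : 'M[rat]_24 -> bool * vec -> bool * vec).
Hypothesis eps_cocycle : leech_cocycle eps.
Hypothesis s_lift : forall M, Co0 M ->
  in_OhatL eps (s M) /\ forall k, in_leech k -> (s M (false, k)).2 = k *m M.
Hypothesis s_mul : forall M1 M2 x, Co0 M1 -> Co0 M2 -> in_hatL x ->
  s (M1 *m M2) x = s M2 (s M1 x).

Lemma splitting_phase_norm M k : `|splitting_phase R s M k| = 1.
Proof. by rewrite /splitting_phase /sgnC; case: (_.1); rewrite ?normrN1 ?normr1. Qed.

Lemma splitting_phase_twist M k k' : Co0 M -> in_leech k -> in_leech k' -> in_leech (k + k') ->
  sgnC R (eps k k') * splitting_phase R s M (k + k')
  = splitting_phase R s M k * splitting_phase R s M k' * sgnC R (eps (k *m M) (k' *m M)).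
Proof.
move=> M_Co0 k_leech k'_leech kk'_leech; have [sM_OhatL sM_lin] := s_lift M_Co0.
have := congr1 fst (sM_OhatL.2.1 (false, k) (false, k') k_leech k'_leech).
rewrite /hmul /= (OhatL_pair _ eps_cocycle sM_OhatL kk'_leech) /= !sM_lin // => sum_sgn.
by rewrite /splitting_phase -!sgnC_addb sum_sgn.
Qed.

Lemma splitting_phase_mul M1 M2 k : Co0 M1 -> Co0 M2 -> in_leech k ->
  splitting_phase R s M2 (k *m M1) * splitting_phase R s M1 k
  = splitting_phase R s (M1 *m M2) k.
Proof.
move=> M1_Co0 M2_Co0 k_leech; have [sM1_OhatL sM1_lin] := s_lift M1_Co0.
rewrite /splitting_phase s_mul // (OhatL_pair _ eps_cocycle sM1_OhatL k_leech) /= sM1_lin //.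
rewrite (OhatL_pair (s M1 (false, k)).1 eps_cocycle (s_lift M2_Co0).1 (M1_Co0.2 _ k_leech)).
by rewrite sgnC_addb mulrC.
Qed.

End Splitting.

Theorem mainTheorem2 (R : realType) (eps : vec -> vec -> bool) :
  leech_cocycle eps ->
  (~ exists zeta : 'M[rat]_24 -> vec -> R[i],
       (forall M k, Co0 M -> in_leech k -> `|zeta M k| = 1) /\
       (forall M k k', Co0 M -> in_leech k -> in_leech k' ->
          sgnC R (eps k k') * zeta M (k + k')
          = zeta M k * zeta M k' * sgnC R (eps (k *m M) (k' *m M))) /\
       (forall M1 M2 k, Co0 M1 -> Co0 M2 -> in_leech k ->
          zeta M2 (k *m M1) * zeta M1 k = zeta (M1 *m M2) k))
  /\
  (~ exists s : 'M[rat]_24 -> bool * vec -> bool * vec,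
       (forall M, Co0 M ->
          in_OhatL eps (s M) /\
          forall k, in_leech k -> (s M (false, k)).2 = k *m M) /\
       (forall M1 M2 x, Co0 M1 -> Co0 M2 -> in_hatL x ->
          s (M1 *m M2) x = s M2 (s M1 x))).
Proof.
move=> eps_cocycle; split=> [[zeta [zeta_norm [zeta_twist zeta_mul]]] | [s [s_lift s_mul]]].
  apply: (no_twist eps_cocycle zeta_norm _ zeta_mul) => M k k' M_Co0 k_leech k'_leech _.
  exact: zeta_twist.
apply: (no_twist eps_cocycle (fun M k _ _ => splitting_phase_norm R s M k)).
  exact: splitting_phase_twist eps_cocycle s_lift.
exact: splitting_phase_mul eps_cocycle s_lift s_mul.
Qed.
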